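(* Let $M$ be a bicomplex Hilbert space (as defined below), $V$ its associated complex vector space, and $A:M\to M$ a $\mathbb{T}$-linear operator having a bicomplex adjoint $A^*$. For $k=1,2$ let $P_k(A):M\to V$ be $P_k(A)|\psi\rangle:=P_k(A|\psi\rangle)$. Let $|\psi\rangle=\mathbf{e_1}|\psi_{\mathbf{e_1}}\rangle+\mathbf{e_2}|\psi_{\mathbf{e_2}}\rangle\in M$ with $|\psi_{\mathbf{e_k}}\rangle\in V$. Then (i) $A|\psi\rangle=\mathbf{e_1}P_1(A)|\psi_{\mathbf{e_1}}\rangle+\mathbf{e_2}P_2(A)|\psi_{\mathbf{e_2}}\rangle$; (ii) for $k=1,2$, $P_k(A)^*=P_k(A^* )$, where $P_k(A)^*$ denotes the standard adjoint, with respect to the restriction of $(\cdot,\cdot)$ to $V$ (a complex inner product over $\mathbb{C}(\mathbf{i_1})$), of the restriction of $P_k(A)$ to $V$ (and $P_k(A^* )$ is likewise restricted to $V$).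
   Context: Bicomplex numbers: $\mathbb{T}=\{z_1+z_2\mathbf{i_2}: z_1,z_2\in\mathbb{C}(\mathbf{i_1})\}$, $\mathbb{C}(\mathbf{i_1})=\{x+y\mathbf{i_1}: x,y\in\mathbb{R}\}$, $\mathbf{i_1}^2=\mathbf{i_2}^2=-1$, $\mathbf{i_1}\mathbf{i_2}=\mathbf{i_2}\mathbf{i_1}=\mathbf{j}$, $\mathbf{j}^2=1$ (commutative). Hyperbolic numbers $\mathbb{D}=\{x+y\mathbf{j}:x,y\in\mathbb{R}\}$. Idempotents $\mathbf{e_1}=(1+\mathbf{j})/2$, $\mathbf{e_2}=(1-\mathbf{j})/2$. Conjugation: $(z_1+z_2\mathbf{i_2})^{\dagger_3}=\overline{z_1}-\overline{z_2}\mathbf{i_2}$. $\mathbb{D}^+=\{a\mathbf{e_1}+b\mathbf{e_2}: a,b\ge 0\}$. $M$ is a free $\mathbb{T}$-module with finite basis $\{|m_1\rangle,\dots,|m_n\rangle\}$, $V=\{\sum x_l|m_l\rangle: x_l\in\mathbb{C}(\mathbf{i_1})\}$; for $|\phi\rangle=\sum x_l|m_l\rangle$ with $x_l=x_{1l}\mathbf{e_1}+x_{2l}\mathbf{e_2}$, $x_{kl}\in\mathbb{C}(\mathbf{i_1})$, set $P_k(|\phi\rangle)=|\phi_{\mathbf{e_k}}\rangle=\sum_l x_{kl}|m_l\rangle\in V$, so $|\phi\rangle=\mathbf{e_1}|\phi_{\mathbf{e_1}}\rangle+\mathbf{e_2}|\phi_{\mathbf{e_2}}\rangle$ uniquely.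 $M$ carries a bicomplex scalar product $(\cdot,\cdot):M\times M\to\mathbb{T}$: additive in the second argument, $(|\phi\rangle,\alpha|\psi\rangle)=\alpha(|\phi\rangle,|\psi\rangle)$ for $\alpha\in\mathbb{T}$, $(|\phi\rangle,|\psi\rangle)=(|\psi\rangle,|\phi\rangle)^{\dagger_3}$, $(|\phi\rangle,|\phi\rangle)=0\iff|\phi\rangle=0$, hyperbolic positive ($(|\phi\rangle,|\phi\rangle)\in\mathbb{D}^+$) and closed on $V$ ($(|\phi\rangle,|\psi\rangle)\in\mathbb{C}(\mathbf{i_1})$ for $|\phi\rangle,|\psi\rangle\in V$); ''bicomplex Hilbert space'' means moreover $M$ is complete for the norm $\|\phi\|=\big((\|\phi_{\mathbf{e_1}}\|^2+\|\phi_{\mathbf{e_2}}\|^2)/2\big)^{1/2}$, $\|\chi\|=(\chi,\chi)^{1/2}$ on $V$. Write $\langle\phi|\psi\rangle=(|\phi\rangle,|\psi\rangle)$. The bicomplex adjoint of $A$ is the operator $A^*:M\to M$ such that $(A|\psi\rangle,|\phi\rangle)=(|\psi\rangle,A^*|\phi\rangle)$ for all $|\phi\rangle,|\psi\rangle\in M$ (equivalently $\langle\psi|A^*|\phi\rangle=\langle\phi|A|\psi\rangle^{\dagger_3}$). *)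

From HB Require Import structures.
From mathcomp Require Import all_boot all_order all_algebra.
From mathcomp Require Import complex.
Set Implicit Arguments. Unset Strict Implicit. Unset Printing Implicit Defensive.
Import Order.TTheory GRing.Theory Num.Theory.
Local Open Scope ring_scope.

Section Bicomplex.
Variable R : rcfType.
Local Notation C := R[i].

(* A bicomplex number z1 + z2 i2 is the pair (z1, z2), z1 z2 in C(i1). *)
Record bicomplex := BC { bc1 : C; bc2 : C }.

Definition bc_add (z w : bicomplex) := BC (bc1 z + bc1 w) (bc2 z + bc2 w).
Definition bc_opp (z : bicomplex) := BC (- bc1 z) (- bc2 z).
(* (z1 + z2 i2)(w1 + w2 i2) = (z1 w1 - z2 w2) + (z1 w2 + z2 w1) i2 *)
Definition bc_mul (z w : bicomplex) :=
  BC (bc1 z * bc1 w - bc2 z * bc2 w) (bc1 z * bc2 w + bc2 z * bc1 w).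
Definition bc0 := BC 0 0.
Definition bc_of_C (z : C) := BC z 0.
Definition bc_of_R (x : R) := BC (x%:C)%C 0.
Definition bc_i1 := BC 'i%C 0.
Definition bc_i2 := BC 0 1.
Definition bc_j := bc_mul bc_i1 bc_i2.
Definition bc_e1 := bc_mul (bc_of_R (1/2)) (bc_add (BC 1 0) bc_j).
Definition bc_e2 := bc_mul (bc_of_R (1/2)) (bc_add (BC 1 0) (bc_opp bc_j)).
Definition bc_dag3 (z : bicomplex) := BC (conjc (bc1 z)) (- conjc (bc2 z)).
Definition in_Dplus (z : bicomplex) :=
  exists a b : R, 0 <= a /\ 0 <= b /\
    z = bc_add (bc_mul (bc_of_R a) bc_e1) (bc_mul (bc_of_R b) bc_e2).
Definition in_Ci1 (z : bicomplex) := bc2 z = 0.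
(* idempotent components : z = e1 * P1 z + e2 * P2 z  with P_k z in C(i1),
   explicitly P1 (z1 + z2 i2) = z1 - i1 z2,  P2 (z1 + z2 i2) = z1 + i1 z2. *)
Definition bc_P1 (z : bicomplex) : C := bc1 z - 'i%C * bc2 z.
Definition bc_P2 (z : bicomplex) : C := bc1 z + 'i%C * bc2 z.
Definition bc_P (k : bool) := if k then bc_P1 else bc_P2.

(* The free T-module M with basis |m_1>,...,|m_n>, identified with T^n
   through coordinates in that basis; V = C(i1)-span of the basis, i.e. C^n. *)
Variable n : nat.
Definition Mod := 'I_n -> bicomplex.
Definition Vec := 'I_n -> C.
Definition m_add (u v : Mod) : Mod := fun l => bc_add (u l) (v l).
Definition m_opp (u : Mod) : Mod := fun l => bc_opp (u l).
Definition m_scale (a : bicomplex) (u : Mod) : Mod := fun l => bc_mul a (u l).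
Definition m0 : Mod := fun _ => bc0.
Definition v_emb (x : Vec) : Mod := fun l => bc_of_C (x l).
Definition m_P (k : bool) (u : Mod) : Vec := fun l => bc_P k (u l).
Definition m_P1 := m_P true.
Definition m_P2 := m_P false.

Definition bicomplex_scalar_product (sp : Mod -> Mod -> bicomplex) :=
  (forall phi psi chi, sp phi (m_add psi chi) = bc_add (sp phi psi) (sp phi chi)) /\
      (forall phi psi a, sp phi (m_scale a psi) = bc_mul a (sp phi psi)) /\
      (forall phi psi, sp phi psi = bc_dag3 (sp psi phi)) /\
      (forall phi, sp phi phi = bc0 <-> phi = m0) /\
      (forall phi, in_Dplus (sp phi phi)) /\
      (forall x y : Vec, in_Ci1 (sp (v_emb x) (v_emb y))).

Definition vsp (sp : Mod -> Mod -> bicomplex) (x y : Vec) : C :=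
  bc1 (sp (v_emb x) (v_emb y)).
Definition vnorm (sp : Mod -> Mod -> bicomplex) (x : Vec) : R :=
  Num.sqrt (complex.Re (vsp sp x x)).
Definition mnorm (sp : Mod -> Mod -> bicomplex) (u : Mod) : R :=
  Num.sqrt ((vnorm sp (m_P1 u) ^+ 2 + vnorm sp (m_P2 u) ^+ 2) / 2).
Definition complete_for (sp : Mod -> Mod -> bicomplex) :=
  forall u : nat -> Mod,
    (forall eps : R, 0 < eps -> exists N, forall p q, (N <= p)%N -> (N <= q)%N ->
        mnorm sp (m_add (u p) (m_opp (u q))) < eps) ->
    exists lim : Mod, forall eps : R, 0 < eps -> exists N, forall p, (N <= p)%N ->
        mnorm sp (m_add (u p) (m_opp lim)) < eps.

Definition bicomplex_hilbert_space (sp : Mod -> Mod -> bicomplex) :=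
  bicomplex_scalar_product sp /\ complete_for sp.

Definition T_linear (A : Mod -> Mod) :=
  (forall u v, A (m_add u v) = m_add (A u) (A v)) /\
  (forall a u, A (m_scale a u) = m_scale a (A u)).

Definition is_bicomplex_adjoint (sp : Mod -> Mod -> bicomplex) (A Astar : Mod -> Mod) :=
  forall phi psi, sp (A psi) phi = sp psi (Astar phi).

Definition op_P (k : bool) (A : Mod -> Mod) : Vec -> Vec :=
  fun x => m_P k (A (v_emb x)).

Definition is_V_adjoint (sp : Mod -> Mod -> bicomplex) (B Bstar : Vec -> Vec) :=
  forall x y : Vec, vsp sp (B x) y = vsp sp x (Bstar y).

End Bicomplex.

(** The idempotent components [P_1, P_2 : T -> C(i1)] are ring morphisms
    that jointly identify [T] with [C(i1) x C(i1)], with [P_k(e_l)] the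
    Kronecker delta; moreover [e1] and [e2] are self-conjugate.  Expanding
    both arguments of the scalar product along [M = e1 V + e2 V] therefore
    gives [P_k (u, w) = (P_k u, P_k w)], so the [k]-th idempotent component of
    the adjointness identity [(A x, y) = (x, Astar y)] is exactly
    [(P_k(A) x, y) = (x, P_k(Astar) y)] for [x, y] in [V].  Part (i) is
    [T]-linearity together with [e_k z = e_k P_k(z)]. *)
From mathcomp Require Import all_boot all_order all_algebra.
From mathcomp Require Import complex ring lra.
From Stdlib Require Import FunctionalExtensionality.
Import GRing.Theory Num.Theory.
Local Open Scope ring_scope.

Section BicomplexAlgebra.
Variable R : rcfType.
Local Notation e1 := (bc_e1 R).
Local Notation e2 := (bc_e2 R).

Local Ltac bicomplex_unfold :=
  rewrite /bc_add /bc_mul /bc_opp /bc_e1 /bc_e2 /bc_j /bc_i1 /bc_i2 /bc_of_R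
          /bc_of_C /bc_P1 /bc_P2 /bc_dag3 /conjc /=; simpc.

Lemma bc_P_inj (z w : bicomplex R) :
  (forall k : bool, bc_P k z = bc_P k w) -> z = w.
Proof.
case: z w => [[a b] [c d]] [[a' b'] [c' d']] eq_P.
move: (eq_P true) (eq_P false); bicomplex_unfold.
by case=> ? ? [? ?]; congr BC; congr Complex; lra.
Qed.

Lemma bc_P_add (k : bool) (z w : bicomplex R) :
  bc_P k (bc_add z w) = bc_P k z + bc_P k w.
Proof.
case: k z w => [] [[a b] [c d]] [[a' b'] [c' d']]; bicomplex_unfold;
  congr Complex; ring.
Qed.

Lemma bc_P_mul (k : bool) (z w : bicomplex R) :
  bc_P k (bc_mul z w) = bc_P k z * bc_P k w.
Proof.
case: k z w => [] [[a b] [c d]] [[a' b'] [c' d']]; bicomplex_unfold;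
  congr Complex; ring.
Qed.

Lemma bc_P_of_C (k : bool) (a : R[i]) : bc_P k (bc_of_C a) = a.
Proof. by case: k; rewrite /= /bc_P1 /bc_P2 /= mulr0 ?subr0 ?addr0. Qed.

Lemma bc_P_e1 (k : bool) : bc_P k e1 = if k then 1 else 0.
Proof. case: k; bicomplex_unfold; congr Complex; field; rewrite ?pnatr_eq0 //. Qed.

Lemma bc_P_e2 (k : bool) : bc_P k e2 = if k then 0 else 1.
Proof. case: k; bicomplex_unfold; congr Complex; field; rewrite ?pnatr_eq0 //. Qed.

Lemma bc_dag3D (z w : bicomplex R) :
  bc_dag3 (bc_add z w) = bc_add (bc_dag3 z) (bc_dag3 w).
Proof.
case: z w => [[a b] [c d]] [[a' b'] [c' d']]; bicomplex_unfold.
by congr BC; congr Complex; ring.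
Qed.

Lemma bc_dag3M (z w : bicomplex R) :
  bc_dag3 (bc_mul z w) = bc_mul (bc_dag3 z) (bc_dag3 w).
Proof.
case: z w => [[a b] [c d]] [[a' b'] [c' d']]; bicomplex_unfold.
by congr BC; congr Complex; ring.
Qed.

Lemma bc_dag3_e1 : bc_dag3 e1 = e1.
Proof. bicomplex_unfold; congr BC; congr Complex; field; rewrite ?pnatr_eq0 //. Qed.

Lemma bc_dag3_e2 : bc_dag3 e2 = e2.
Proof. bicomplex_unfold; congr BC; congr Complex; field; rewrite ?pnatr_eq0 //. Qed.

Lemma bc_idem_decomp (z : bicomplex R) :
  z = bc_add (bc_mul e1 (bc_of_C (bc_P1 z))) (bc_mul e2 (bc_of_C (bc_P2 z))).
Proof.
apply: bc_P_inj => k.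
rewrite bc_P_add (bc_P_mul k e1) (bc_P_mul k e2) bc_P_e1 bc_P_e2 !bc_P_of_C.
by case: k; rewrite mul1r mul0r ?addr0 ?add0r.
Qed.

Lemma bc_mul_e1_P1 (z : bicomplex R) : bc_mul e1 z = bc_mul e1 (bc_of_C (bc_P1 z)).
Proof.
apply: bc_P_inj => k.
by rewrite !(bc_P_mul k e1) bc_P_e1 bc_P_of_C; case: k; rewrite ?mul0r.
Qed.

Lemma bc_mul_e2_P2 (z : bicomplex R) : bc_mul e2 z = bc_mul e2 (bc_of_C (bc_P2 z)).
Proof.
apply: bc_P_inj => k.
by rewrite !(bc_P_mul k e2) bc_P_e2 bc_P_of_C; case: k; rewrite ?mul0r.
Qed.

End BicomplexAlgebra.

Section BicomplexModule.
Variables (R : rcfType) (n : nat).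
Local Notation e1 := (bc_e1 R).
Local Notation e2 := (bc_e2 R).

Lemma m_idem_decomp (u : Mod R n) :
  u = m_add (m_scale e1 (v_emb (m_P1 u))) (m_scale e2 (v_emb (m_P2 u))).
Proof. apply: functional_extensionality => l; exact: bc_idem_decomp. Qed.

Lemma m_P_v_emb (k : bool) (x : Vec R n) : m_P k (v_emb x) = x.
Proof. apply: functional_extensionality => l; exact: bc_P_of_C. Qed.

Lemma T_linear_idem_decomp (A : Mod R n -> Mod R n) : T_linear A ->
  forall psi1 psi2 : Vec R n,
    A (m_add (m_scale e1 (v_emb psi1)) (m_scale e2 (v_emb psi2)))
    = m_add (m_scale e1 (v_emb (op_P true A psi1)))
            (m_scale e2 (v_emb (op_P false A psi2))).
Proof.
move=> [A_add A_scale] psi1 psi2; rewrite A_add !A_scale.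
apply: functional_extensionality => l.
by rewrite /m_add /m_scale bc_mul_e1_P1 bc_mul_e2_P2.
Qed.

Variable sp : Mod R n -> Mod R n -> bicomplex R.
Hypothesis sp_scalar_product : bicomplex_scalar_product sp.

Lemma sp_addl (u v w : Mod R n) : sp (m_add u v) w = bc_add (sp u w) (sp v w).
Proof.
have [sp_addr [_ [sp_sym _]]] := sp_scalar_product.
by rewrite sp_sym sp_addr bc_dag3D -!sp_sym.
Qed.

Lemma sp_scalel (a : bicomplex R) (u w : Mod R n) :
  sp (m_scale a u) w = bc_mul (bc_dag3 a) (sp u w).
Proof.
have [_ [sp_scaler [sp_sym _]]] := sp_scalar_product.
by rewrite sp_sym sp_scaler bc_dag3M -!sp_sym.
Qed.

Lemma sp_v_emb (x y : Vec R n) : sp (v_emb x) (v_emb y) = bc_of_C (vsp sp x y).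
Proof.
have [_ [_ [_ [_ [_ sp_closed]]]]] := sp_scalar_product.
move: (sp_closed x y); rewrite /vsp /in_Ci1.
by case: (sp (v_emb x) (v_emb y)) => ? ? /= ->.
Qed.

Lemma bc_P_sp (k : bool) (u w : Mod R n) :
  bc_P k (sp u w) = vsp sp (m_P k u) (m_P k w).
Proof.
have [sp_addr [sp_scaler _]] := sp_scalar_product.
rewrite {1}[u]m_idem_decomp {1}[w]m_idem_decomp sp_addl !sp_scalel.
rewrite bc_dag3_e1 bc_dag3_e2 !sp_addr !sp_scaler !sp_v_emb.
rewrite !(bc_P_add, bc_P_mul _ k e1, bc_P_mul _ k e2) !bc_P_of_C bc_P_e1 bc_P_e2.
by rewrite /m_P1 /m_P2; case: k; ring.
Qed.

Lemma op_P_adjoint (A Astar : Mod R n -> Mod R n) :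
  is_bicomplex_adjoint sp A Astar ->
  forall k : bool, is_V_adjoint sp (op_P k A) (op_P k Astar).
Proof.
move=> A_adj k x y.
by rewrite /op_P -{1}(m_P_v_emb k y) -{2}(m_P_v_emb k x) -!bc_P_sp A_adj.
Qed.

End BicomplexModule.

Theorem mainTheorem19 (R : rcfType) (n : nat)
  (sp : Mod R n -> Mod R n -> bicomplex R)
  (Hsp : bicomplex_hilbert_space sp)
  (A Astar : Mod R n -> Mod R n)
  (HA : T_linear A) (Hadj : is_bicomplex_adjoint sp A Astar) :
  (forall psi1 psi2 : Vec R n,
     A (m_add (m_scale (bc_e1 R) (v_emb psi1)) (m_scale (bc_e2 R) (v_emb psi2)))
     = m_add (m_scale (bc_e1 R) (v_emb (op_P true A psi1)))
             (m_scale (bc_e2 R) (v_emb (op_P false A psi2))))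
  /\ (forall k : bool, is_V_adjoint sp (op_P k A) (op_P k Astar)).
Proof.
have [sp_scalar_product _] := Hsp.
split; first exact: T_linear_idem_decomp.
exact: op_P_adjoint.
Qed.
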